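(* Let $G$ be a finite group and let $H_1, \ldots, H_{\ell}$ be proper subgroups of $G$. Suppose that $x_1, \ldots, x_m \in G$ represent distinct $G$-conjugacy classes, and that there are numbers $A_1,\dots,A_\ell$ and $B>0$ with $\sum_{i=1}^m|x_i^G \cap H_j| \leqslant A_j$ for all $j$ and $|x_i^G| \geqslant B$ for all $i$. Then for every positive integer $c$, \[ \sum_{i=1}^{m}|x_i^G|\left(\sum_{j=1}^{\ell}{\rm fpr}(x_i,G/H_j)\right)^c \leqslant B^{1-c}\left(\sum_{j=1}^{\ell}A_j\right)^c. \]
   Context: For $x\in G$ and $H<G$, ${\rm fpr}(x,G/H)=|x^G\cap H|/|x^G|$. *)

From mathcomp Require Import all_boot all_order all_algebra all_fingroup.
Set Implicit Arguments. Unset Strict Implicit. Unset Printing Implicit Defensive.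
Import GRing.Theory Num.Theory.
Local Open Scope ring_scope.

Definition fpr (R : fieldType) (gT : finGroupType) (G H : {set gT}) (x : gT) : R :=
  (#|((x ^: G) :&: H)%g|%:R) / (#|(x ^: G)%g|%:R).

From mathcomp Require Import all_boot all_order all_algebra all_fingroup.
Set Implicit Arguments. Unset Strict Implicit. Unset Printing Implicit Defensive.
Import Order.TTheory GRing.Theory Num.Theory.
Local Open Scope ring_scope.

(* With s_i = \sum_j |x_i^G ∩ H_j|, the i-th summand equals
   s_i^c / |x_i^G|^(c-1) <= B^(1-c) s_i^c.  Since t |-> t^c is superadditive
   on nonnegative reals, \sum_i s_i^c <= (\sum_i s_i)^c, and exchanging the
   double sum gives \sum_i s_i <= \sum_j A_j. *)

Lemma lerD_exprS (R : numDomainType) (a b : R) (n : nat) :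
  0 <= a -> 0 <= b -> a ^+ n.+1 + b ^+ n.+1 <= (a + b) ^+ n.+1.
Proof.
move=> a_ge0 b_ge0; have ab_ge0 : 0 <= a + b by rewrite addr_ge0.
rewrite !exprS mulrDl.
by apply: lerD; apply: ler_wpM2l => //; apply: lerXn2r;
  rewrite ?nnegrE ?lerDl ?lerDr.
Qed.

Lemma ler_sum_exprS (R : numDomainType) (I : Type) (r : seq I) (F : I -> R)
    (n : nat) :
  (forall i, 0 <= F i) ->
  \sum_(i <- r) F i ^+ n.+1 <= (\sum_(i <- r) F i) ^+ n.+1.
Proof.
move=> F_ge0; elim: r => [|a r IHr]; first by rewrite !big_nil expr0n.
have sum_ge0 : 0 <= \sum_(i <- r) F i by apply: sumr_ge0.
rewrite !big_cons; apply: le_trans _ (lerD_exprS n (F_ge0 a) sum_ge0).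
by rewrite lerD2l.
Qed.

Lemma ler_mul_exprS_div (R : numFieldType) (B n s : R) (k : nat) :
  0 < B -> B <= n -> 0 <= s -> n * (s / n) ^+ k.+1 <= B ^- k * s ^+ k.+1.
Proof.
move=> B_gt0 le_Bn s_ge0; have n_gt0 : 0 < n := lt_le_trans B_gt0 le_Bn.
rewrite expr_div_n [n ^+ _]exprSr invfM mulrCA [n * _]mulrCA divff ?gt_eqF //.
rewrite mulr1 mulrC; apply: ler_wpM2r; first exact: exprn_ge0.
rewrite lef_pV2 ?posrE ?exprn_gt0 //.
by apply: lerXn2r; rewrite // nnegrE ltW.
Qed.

Lemma sum_fpr (R : fieldType) (gT : finGroupType) (G : {set gT}) (I : Type)
    (r : seq I) (P : pred I) (H : I -> {set gT}) (x : gT) :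
  \sum_(j <- r | P j) fpr R G (H j) x
    = (\sum_(j <- r | P j) #|(x ^: G :&: H j)%g|%:R) / #|(x ^: G)%g|%:R.
Proof. by rewrite /fpr mulr_suml. Qed.

Theorem lemma2p7 (R : realFieldType) (gT : finGroupType) (G : {group gT})
  (l m : nat) (H : 'I_l -> {group gT}) (x : 'I_m -> gT)
  (A : 'I_l -> R) (B : R) :
  (forall j, H j \proper G) ->
  (forall i, x i \in G) ->
  injective (fun i => (x i ^: G)%g) ->
  (forall j, \sum_(i < m) (#|((x i ^: G) :&: H j)%g|%:R : R) <= A j) ->
  0 < B ->
  (forall i, B <= #|(x i ^: G)%g|%:R) ->
  forall c : nat, (0 < c)%N ->
  \sum_(i < m) (#|(x i ^: G)%g|%:R * (\sum_(j < l) fpr R G (H j) (x i)) ^+ c)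
    <= B ^- (c - 1) * (\sum_(j < l) A j) ^+ c.
Proof.
move=> _ _ _ le_sum_A B_gt0 le_B_class [//|k] _; rewrite subSS subn0.
set s := fun i : 'I_m => \sum_(j < l) (#|(x i ^: G :&: H j)%g|%:R : R).
have s_ge0 i : 0 <= s i by apply: sumr_ge0.
have sum_s_ge0 : 0 <= \sum_(i < m) s i by apply: sumr_ge0.
have le_sum_s : \sum_(i < m) s i <= \sum_(j < l) A j.
  by rewrite exchange_big; apply: ler_sum => j _.
apply: (@le_trans _ _ (\sum_(i < m) B ^- k * s i ^+ k.+1)).
  apply: ler_sum => i _; rewrite sum_fpr.
  exact: ler_mul_exprS_div (le_B_class i) (s_ge0 i).
rewrite -mulr_sumr; apply: ler_wpM2l; first by rewrite invr_ge0 exprn_ge0 ?ltW.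
apply: le_trans (ler_sum_exprS _ k s_ge0) _.
by apply: lerXn2r; rewrite ?nnegrE ?sum_s_ge0 ?(le_trans sum_s_ge0 le_sum_s).
Qed.
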